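(* Let $\mathcal A$ be an infinite simple group, $X$ a finite generating system, $\mathcal K$ a proper non-trivial subgroup and $\Gamma=\mathrm{Sch}(\mathcal A,\mathcal K,X)$. Then the group $\mathrm{Aut}_X(\Gamma)$ of label-preserving automorphisms has infinitely many orbits on vertices. Moreover, if $\mathcal K$ is cyclic of prime order, then $\mathrm{Aut}(\Gamma)$ has infinitely many orbits on vertices, and therefore $\Gamma$ is not almost transitive.
   Context: The Schreier graph $\mathrm{Sch}(\mathcal A,\mathcal K,X)$ has vertices the right cosets $\mathcal Kg$ and, for each coset and each $x$ with $x\in X$ or $x^{-1}\in X$, an edge labeled $x$ from $\mathcal Kg$ to $\mathcal Kgx$ whose inverse is the edge labeled $x^{-1}$ from $\mathcal Kgx$. $\mathrm{Aut}(\Gamma)$ is the group of all graph automorphisms (ignoring labels). A graph is almost transitive if there is a finite set $V_0$ of vertices such that every vertex can be mapped into $V_0$ by an automorphism. *)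

From Stdlib Require Import ClassicalEpsilon List.
From mathcomp Require Import all_boot.
Set Implicit Arguments. Unset Strict Implicit. Unset Printing Implicit Defensive.

Record Grp := {
  gcar :> Type;
  gmul : gcar -> gcar -> gcar;
  gone : gcar;
  ginv : gcar -> gcar;
  gmulA : forall a b c, gmul a (gmul b c) = gmul (gmul a b) c;
  gmul1 : forall a, gmul gone a = a;
  gmulV : forall a, gmul (ginv a) a = gone }.

Section GroupNotions.
Variable A : Grp.

Fixpoint gpow (a : A) (k : nat) : A :=
  match k with 0 => gone A | k'.+1 => gmul a (gpow a k') end.

Definition subgroup (H : A -> Prop) : Prop :=
  H (gone A) /\ (forall a b, H a -> H b -> H (gmul a b)) /\
  (forall a, H a -> H (ginv a)).

Definition normal_subgroup (N : A -> Prop) : Prop :=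
  subgroup N /\ forall g k, N k -> N (gmul (ginv g) (gmul k g)).

Definition simple_group : Prop :=
  (exists a : A, a <> gone A) /\
  forall N, normal_subgroup N -> (forall a, N a -> a = gone A) \/ (forall a, N a).

Definition infinite_group : Prop := ~ exists l : list A, forall a, In a l.

Definition generates n (x : 'I_n -> A) : Prop :=
  forall H, subgroup H -> (forall i, H (x i)) -> forall a, H a.

Definition proper_nontrivial (K : A -> Prop) : Prop :=
  (exists k, K k /\ k <> gone A) /\ (exists a, ~ K a).

Definition cyclic_prime_order (K : A -> Prop) : Prop :=
  exists (k : A) (p : nat), prime p /\ k <> gone A /\ gpow k p = gone A /\
    forall a, K a <-> exists i, a = gpow k i.

Definition rcoset (K : A -> Prop) (g : A) : A -> Prop :=
  fun y => K (gmul y (ginv g)).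

End GroupNotions.

Record sgraph := {
  Vtx : Type;
  Edg : Type;
  org : Edg -> Vtx;
  erev : Edg -> Edg }.

Definition is_aut (G : sgraph) (fV : Vtx G -> Vtx G) (fE : Edg G -> Edg G) : Prop :=
  bijective fV /\ bijective fE /\
  (forall e, org (fE e) = fV (org e)) /\
  (forall e, fE (erev e) = erev (fE e)).

Definition is_aut_lab (G : sgraph) (L : Type) (lab : Edg G -> L)
    (fV : Vtx G -> Vtx G) (fE : Edg G -> Edg G) : Prop :=
  is_aut fV fE /\ forall e, lab (fE e) = lab e.

Definition infinitely_many_orbits (G : sgraph)
    (P : (Vtx G -> Vtx G) -> (Edg G -> Edg G) -> Prop) : Prop :=
  ~ exists l : list (Vtx G),
      forall v, exists w fV fE, In w l /\ P fV fE /\ fV w = v.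

Definition almost_transitive (G : sgraph) : Prop :=
  exists V0 : list (Vtx G),
    forall v, exists fV fE, is_aut fV fE /\ In (fV v) V0.

Section Schreier.
Variables (A : Grp) (K : A -> Prop) (n : nat) (x : 'I_n -> A).

Definition sch_vertex := { S : A -> Prop | exists g, S = rcoset K g }.
Definition mkV (g : A) : sch_vertex := exist _ (rcoset K g) (ex_intro _ g erefl).
Definition vrep (v : sch_vertex) : A :=
  proj1_sig (constructive_indefinite_description _ (proj2_sig v)).

(* letters: (i, true) stands for x_i, (i, false) for x_i^-1 *)
Definition letter := ('I_n * bool)%type.
Definition letval (l : letter) : A :=
  if l.2 then x l.1 else ginv (x l.1).

(* edge (Kg, l) goes from Kg to Kg·l; its inverse is (Kg·l, l^-1) *)
Definition sch_edge := (sch_vertex * letter)%type.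
Definition sch_rev (e : sch_edge) : sch_edge :=
  (mkV (gmul (vrep e.1) (letval e.2)), (e.2.1, ~~ e.2.2)).

Definition Schreier : sgraph :=
  {| Vtx := sch_vertex; Edg := sch_edge; org := fst; erev := sch_rev |}.

Definition sch_label (e : Edg Schreier) : letter := snd e.
End Schreier.

From Stdlib Require Import ClassicalEpsilon ProofIrrelevance.
From Stdlib Require Import FunctionalExtensionality PropExtensionality List.
From mathcomp Require Import all_boot zify.
Set Implicit Arguments. Unset Strict Implicit. Unset Printing Implicit Defensive.

(* Both statements reduce to one group-theoretic fact: in an infinite simple group the
   normalizer N of a proper non-trivial subgroup K has infinitely many cosets. Indeed a
   subgroup of finite index has a non-trivial core; the core is normal, so simplicity makes
   N the whole group and K normal, which is impossible.
   A label-preserving automorphism of Sch(A, K, X) is a left multiplication Kg |-> Khg with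
   h in N, so finitely many orbits would give finitely many cosets of N.
   An arbitrary automorphism maps the closed walks of length L at v injectively onto closed
   walks at the image of v, while the walks whose label evaluates to 1 are closed at every
   vertex. So if Kg carries a closed walk whose label b is not 1, so does every vertex Ka of
   its orbit, with a label b' of the same length and a b' a^-1 in K. When K is cyclic of
   prime order this forces a^-1 K a = <b'>, so finitely many orbits would leave only finitely
   many conjugates of K, i.e. again finitely many cosets of N. *)

Definition asbool (P : Prop) : bool := if excluded_middle_informative P then true else false.

Lemma asboolP (P : Prop) : reflect P (asbool P).
Proof. by rewrite /asbool; case: excluded_middle_informative => p; constructor. Qed.

Lemma In_mem (T : eqType) (t : T) (s : seq T) : t \in s -> In t s.
Proof. by elim: s => [//|y s IH]; rewrite in_cons => /orP [/eqP ->|/IH]; [left | right]. Qed.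

Lemma list_choice (T U : Type) (P : T -> U -> Prop) (l : list T) :
  (forall t, In t l -> exists u, P t u) ->
  exists us : list U, forall t, In t l -> exists2 u, In u us & P t u.
Proof.
elim: l => [|t l IH] exP; first by exists nil.
have [us Pus] := IH (fun t' l_t' => exP t' (or_intror l_t')).
have [u Ptu] := exP t (or_introl erefl).
exists (u :: us) => t' [<-|/Pus [u' us_u' Pu']]; first by exists u; [left|].
by exists u'; [right|].
Qed.

Lemma finite_of_injective (T : Type) (F : finType) (f : T -> F) :
  injective f -> exists s : list T, forall t, In t s.
Proof.
move=> f_inj.
pose pre (y : F) : option T :=
  match excluded_middle_informative (exists t, f t = y) with
  | left ex_t => Some (proj1_sig (constructive_indefinite_description _ ex_t))
  | right _ => None
  end.
have pre_f t : pre (f t) = Some t.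
  rewrite /pre; case: excluded_middle_informative => [ex_t|[]]; last by exists t.
  by case: constructive_indefinite_description => t' /= /f_inj ->.
exists (pmap pre (enum F)) => t.
have /In_mem : f t \in enum F by rewrite mem_enum.
elim: (enum F) => [//|y s IH] /= [->|/IH]; first by rewrite pre_f; left.
by case: (pre y) => [t'|] //= ?; right.
Qed.

Lemma mul_inverse_mod (p j : nat) :
  prime p -> ~~ (p %| j) -> exists e q, j * e = q * p + 1.
Proof.
move=> p_pr pNj.
have p_gt1 := prime_gt1 p_pr.
have [u _] := Bezoutl j (ltnW p_gt1).
have /eqP -> : gcdn p j == 1 by rewrite -/(coprime p j) prime_coprime.
(* p divides 1 + u j, so j u = -1 and j (u (p - 1)) = 1 modulo p. *)
case/dvdnP => c ec; exists (u * (p - 1)), (u * j - c).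
have : c <= u * j by nia.
nia.
Qed.

Section Groups.
Variable A : Grp.
Local Notation "a ** b" := (gmul a b) (at level 40, left associativity).
Local Notation "1" := (gone A).
Local Notation "a ^-1" := (ginv a).

Lemma mulgV (a : A) : a ** a^-1 = 1.
Proof.
have -> : a ** a^-1 = (a^-1)^-1 ** a^-1 ** (a ** a^-1) by rewrite gmulV gmul1.
by rewrite -gmulA (gmulA (a^-1)) gmulV gmul1 gmulV.
Qed.

Lemma mulg1 (a : A) : a ** 1 = a.
Proof. by rewrite -(gmulV a) gmulA mulgV gmul1. Qed.

Lemma mulgK (a b : A) : a ** b ** b^-1 = a.
Proof. by rewrite -gmulA mulgV mulg1. Qed.

Lemma mulgVK (a b : A) : a ** b^-1 ** b = a.
Proof. by rewrite -gmulA gmulV mulg1. Qed.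

Lemma mulKg (a b : A) : a^-1 ** (a ** b) = b.
Proof. by rewrite gmulA gmulV gmul1. Qed.

Lemma invg_uniq (a b : A) : a ** b = 1 -> a^-1 = b.
Proof. by move=> ab1; rewrite -[b](mulKg a) ab1 mulg1. Qed.

Lemma invgK (a : A) : (a^-1)^-1 = a.
Proof. exact/invg_uniq/gmulV. Qed.

Lemma invgM (a b : A) : (a ** b)^-1 = b^-1 ** a^-1.
Proof. by apply: invg_uniq; rewrite gmulA mulgK mulgV. Qed.

Lemma invg1 : 1^-1 = 1.
Proof. exact/invg_uniq/gmul1. Qed.

Lemma mulIg (a b c : A) : a ** c = b ** c -> a = b.
Proof. by move=> acbc; rewrite -[a](mulgK _ c) acbc mulgK. Qed.

Lemma conjg_inj (g a b : A) : g ** a ** g^-1 = g ** b ** g^-1 -> a = b.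
Proof. by move/mulIg/(f_equal (gmul g^-1)); rewrite !mulKg. Qed.

Lemma gpowD (a : A) m k : gpow a (m + k) = gpow a m ** gpow a k.
Proof. by elim: m => [|m IH] /=; rewrite ?gmul1 // IH gmulA. Qed.

Lemma gpow1g k : gpow 1 k = 1.
Proof. by elim: k => [|k IH] //=; rewrite IH gmul1. Qed.

Lemma gpowM (a : A) m k : gpow a (m * k) = gpow (gpow a m) k.
Proof. by elim: k => [|k IH] /=; rewrite ?muln0 // mulnS gpowD IH. Qed.

Lemma conjg_gpow (g b : A) i : g ** gpow b i ** g^-1 = gpow (g ** b ** g^-1) i.
Proof. by elim: i => [|i IH] /=; rewrite ?mulg1 ?mulgV // -IH !gmulA mulgVK. Qed.

Section Subgroups.
Variable H : A -> Prop.
Hypothesis subH : subgroup H.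

Lemma subgroup1 : H 1.
Proof. by case: subH. Qed.

Lemma subgroupM a b : H a -> H b -> H (a ** b).
Proof. by case: subH => _ [HM _]; apply: HM. Qed.

Lemma subgroupV a : H a -> H a^-1.
Proof. by case: subH => _ [_ HV]; apply: HV. Qed.

Definition finite_index := exists l : list A, forall a, exists2 c, In c l & H (a ** c^-1).

Definition core (a : A) := forall b, H (b ** a ** b^-1).

Lemma core_normal : normal_subgroup core.
Proof.
split; first split.
- by move=> b; rewrite mulg1 mulgV; exact: subgroup1.
- split=> [a1 a2 Ha1 Ha2 b | a Ha b].
    have -> : b ** (a1 ** a2) ** b^-1 = b ** a1 ** b^-1 ** (b ** a2 ** b^-1).
      by rewrite !gmulA mulgVK.
    exact: subgroupM.
  have -> : b ** a^-1 ** b^-1 = (b ** a ** b^-1)^-1 by rewrite !invgM invgK !gmulA.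
  exact: subgroupV.
- move=> g k Hk b; have := Hk (b ** g^-1).
  by rewrite !invgM invgK !gmulA.
Qed.

Lemma finite_index_core : infinite_group A -> finite_index -> exists2 a, core a & a <> 1.
Proof.
move=> A_inf [l cover]; apply: NNPP => core_triv.
have core1 a : core a -> a = 1.
  by move=> Ha; apply: NNPP => a_ne1; apply: core_triv; exists a.
pose m := length l; pose c (i : 'I_m) := List.nth i l 1.
have cover_idx y : exists i : 'I_m, H (y ** (c i)^-1).
  have [c0 /(In_nth _ _ 1) [i [/ltP lt_i <-]] Hy] := cover y.
  by exists (Ordinal lt_i).
pose pick y := proj1_sig (constructive_indefinite_description _ (cover_idx y)).
have pickP y : H (y ** (c (pick y))^-1).
  by rewrite /pick; case: constructive_indefinite_description.
(* a |-> (coset of c_i a)_i is injective modulo the core, so a trivial core makes A finite. *)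
pose phi a : {ffun 'I_m -> 'I_m} := [ffun i => pick (c i ** a)].
apply: A_inf; apply: (@finite_of_injective _ _ phi) => a a' phi_eq.
have Hc i : H (c i ** (a ** a'^-1) ** (c i)^-1).
  have := subgroupM (pickP (c i ** a)) (subgroupV (pickP (c i ** a'))).
  have -> : pick (c i ** a') = pick (c i ** a).
    by have := congr1 (fun f : {ffun _ -> _} => f i) phi_eq; rewrite /= !ffunE.
  by rewrite !invgM !invgK !gmulA mulgVK.
suff /core1 : core (a ** a'^-1) by move/(f_equal (fun y => y ** a')); rewrite mulgVK gmul1.
move=> b; have [i Hbc] := cover_idx b.
have -> : b ** (a ** a'^-1) ** b^-1 =
    b ** (c i)^-1 ** (c i ** (a ** a'^-1) ** (c i)^-1) ** (b ** (c i)^-1)^-1.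
  by rewrite !invgM !invgK !gmulA !mulgVK.
by apply: subgroupM; [apply: subgroupM | apply: subgroupV].
Qed.

Lemma simple_finite_index :
  infinite_group A -> simple_group A -> finite_index -> forall a, H a.
Proof.
move=> A_inf [_ A_simple] fin a.
case: (A_simple _ core_normal) => [core1 | core_all].
  by have [b /core1] := finite_index_core A_inf fin.
by have := core_all a 1; rewrite gmul1 invg1 mulg1.
Qed.

End Subgroups.

Section Normalizer.
Variable K : A -> Prop.

(* Both inclusions are needed: in an infinite group h K h^-1 <= K does not give equality. *)
Definition normalizer (h : A) := forall k, K k -> K (h ** k ** h^-1) /\ K (h^-1 ** k ** h).

Lemma normalizer_conj_eq a c :
  (forall y, K (a ** y ** a^-1) <-> K (c ** y ** c^-1)) -> normalizer (a ** c^-1).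
Proof.
move=> conj_eq k Kk; rewrite invgM invgK; split.
- have := (conj_eq (c^-1 ** k ** c)).2; rewrite !gmulA !mulgV !gmul1 mulgK.
  by apply.
- have := (conj_eq (a^-1 ** k ** a)).1; rewrite !gmulA !mulgV !gmul1 mulgK.
  by apply.
Qed.

Definition conj_eq_cycle (g b : A) := forall y, K (g ** y ** g^-1) <-> exists i, y = gpow b i.

Lemma cyclic_prime_conj g b : cyclic_prime_order K ->
  K (g ** b ** g^-1) -> b <> 1 -> conj_eq_cycle g b.
Proof.
move=> [k [p [p_pr [k_ne1 [kp1 K_cyc]]]]] Kb b_ne1.
have [j bj] := (K_cyc _).1 Kb.
have pNj : ~~ (p %| j).
  apply/negP => /dvdnP [q jq]; apply: b_ne1; apply: (@conjg_inj g).
  by rewrite bj jq mulnC gpowM kp1 gpow1g mulg1 mulgV.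
have [e [q je]] := mul_inverse_mod p_pr pNj.
have k_conj : k = g ** gpow b e ** g^-1.
  by rewrite conjg_gpow bj -gpowM je gpowD mulnC gpowM kp1 gpow1g gmul1 /= mulg1.
move=> y; split.
- case/(K_cyc _).1 => i yi; exists (e * i); apply: (@conjg_inj g).
  by rewrite yi k_conj gpowM !conjg_gpow.
- by case=> i ->; apply/(K_cyc _).2; exists (j * i); rewrite gpowM -bj conjg_gpow.
Qed.

Lemma normalizer_subgroup : subgroup normalizer.
Proof.
split; first by move=> k Kk; rewrite invg1 gmul1 !mulg1.
split=> [a b Na Nb k Kk | a Na k Kk]; last by rewrite invgK; case: (Na k Kk).
rewrite invgM; split.
- by have := (Na _ (Nb _ Kk).1).1; rewrite !gmulA.
- by have := (Nb _ (Na _ Kk).2).2; rewrite !gmulA.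
Qed.

Hypothesis subK : subgroup K.

Lemma sub_normalizer a : K a -> normalizer a.
Proof.
by move=> Ka k Kk; split; do ![apply: subgroupM] => //; apply: subgroupV.
Qed.

Lemma normalizer_infinite_index :
  infinite_group A -> simple_group A -> proper_nontrivial K -> ~ finite_index normalizer.
Proof.
move=> A_inf A_simple [[k [Kk k_ne1]] [a Ka]] fin.
have N_all := simple_finite_index normalizer_subgroup A_inf A_simple fin.
have K_normal : normal_subgroup K.
  by split=> // g h Kh; rewrite gmulA; case: (N_all g h Kh).
case: A_simple => _ /(_ _ K_normal) [K1 | K_all].
- exact/k_ne1/K1.
- exact/Ka/K_all.
Qed.

End Normalizer.

Section SchreierGraph.
Variables (K : A -> Prop) (n : nat) (x : 'I_n -> A).
Hypothesis subK : subgroup K.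
Local Notation V := (sch_vertex K).
Local Notation mkV := (mkV K).
Local Notation letter := (letter n).
Local Notation Sch := (Schreier K x).

Lemma mkV_eq g g' : mkV g = mkV g' <-> K (g ** g'^-1).
Proof.
split=> [/(f_equal (fun v => proj1_sig v g)) /= | Kgg'].
  by rewrite /rcoset mulgV => <-; apply: subgroup1.
apply: subset_eq_compat; apply: functional_extensionality => y.
apply: propositional_extensionality; rewrite /rcoset; split=> Ky.
- have -> : y ** g'^-1 = y ** g^-1 ** (g ** g'^-1) by rewrite !gmulA mulgVK.
  exact: subgroupM.
- have -> : y ** g^-1 = y ** g'^-1 ** (g ** g'^-1)^-1.
    by rewrite invgM invgK !gmulA mulgVK.
  by apply: subgroupM => //; apply: subgroupV.
Qed.

Lemma mkV_vrep v : mkV (vrep v) = v.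
Proof.
apply: eq_sig_hprop => [S p q | /=]; first exact: proof_irrelevance.
by rewrite /vrep; case: constructive_indefinite_description.
Qed.

Definition sch_target (v : V) (l : letter) : V := mkV (vrep v ** letval x l).

Lemma sch_target_mkV g l : sch_target (mkV g) l = mkV (g ** letval x l).
Proof.
apply/mkV_eq; rewrite invgM !gmulA mulgK.
by apply/mkV_eq; rewrite mkV_vrep.
Qed.

Fixpoint word_eval (w : seq letter) : A :=
  if w is l :: w' then letval x l ** word_eval w' else 1.

Fixpoint walk_end (v : V) (w : seq letter) : V :=
  if w is l :: w' then walk_end (sch_target v l) w' else v.

Lemma walk_end_mkV g w : walk_end (mkV g) w = mkV (g ** word_eval w).
Proof.
by elim: w g => [|l w IH] g /=; rewrite ?mulg1 // sch_target_mkV IH gmulA.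
Qed.

Lemma word_eval_cat w1 w2 : word_eval (w1 ++ w2) = word_eval w1 ** word_eval w2.
Proof. by elim: w1 => [|l w IH] /=; rewrite ?gmul1 // IH gmulA. Qed.

Definition letter_inv (l : letter) : letter := (l.1, ~~ l.2).

Lemma letval_inv l : letval x (letter_inv l) = (letval x l)^-1.
Proof. by case: l => i [] //=; rewrite invgK. Qed.

Lemma word_eval_inv w : word_eval (rev (map letter_inv w)) = (word_eval w)^-1.
Proof.
elim: w => [|l w IH] /=; first by rewrite invg1.
by rewrite rev_cons -cats1 word_eval_cat IH /= mulg1 invgM letval_inv.
Qed.

Lemma word_eval_surj : generates x -> forall a, exists w, word_eval w = a.
Proof.
move=> gen_x; apply: gen_x => [|i]; last by exists [:: (i, true)]; rewrite /= mulg1.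
split; first by exists [::].
split=> [_ _ [w1 <-] [w2 <-] | _ [w <-]].
- by exists (w1 ++ w2); rewrite word_eval_cat.
- by exists (rev (map letter_inv w)); rewrite word_eval_inv.
Qed.

Definition closed_walks (v : V) L : {set L.-tuple letter} :=
  [set t : L.-tuple letter | asbool (walk_end v t = v)].

Definition null_words L : {set L.-tuple letter} :=
  [set t : L.-tuple letter | asbool (word_eval t = 1)].

Definition has_essential_loop (v : V) L := ~~ (closed_walks v L \subset null_words L).

Lemma null_words_closed v L : null_words L \subset closed_walks v L.
Proof.
apply/subsetP => t; rewrite !inE => /asboolP t1; apply/asboolP.
by rewrite -(mkV_vrep v) walk_end_mkV t1 mulg1.
Qed.

Lemma essential_loop_exists :
  generates x -> proper_nontrivial K -> forall v, exists L, has_essential_loop v L.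
Proof.
move=> gen_x [[k [Kk k_ne1]] _] v; set c := vrep v.
have [w wk] := word_eval_surj gen_x (c^-1 ** k ** c).
exists (size w); apply/subsetPn; exists (in_tuple w); rewrite !inE.
- apply/asboolP; rewrite -(mkV_vrep v) walk_end_mkV /= wk -/c.
  by apply/mkV_eq; rewrite !gmulA mulgV gmul1 mulgK.
- apply/asboolP; rewrite /= wk => k1; apply: k_ne1.
  by apply: (@conjg_inj c^-1); rewrite invgK k1 mulg1 gmulV.
Qed.

Lemma essential_loopP a L : has_essential_loop (mkV a) L ->
  exists t : L.-tuple letter, word_eval t <> 1 /\ K (a ** word_eval t ** a^-1).
Proof.
case/subsetPn => t; rewrite !inE => /asboolP closed_t /asboolP t_ne1.
by exists t; split=> //; move: closed_t; rewrite walk_end_mkV => /mkV_eq.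
Qed.

Section Automorphism.
Variables (fV : V -> V) (fE : Edg Sch -> Edg Sch).
Hypothesis autf : is_aut (G := Sch) fV fE.

Lemma aut_edge v l : fE (v, l) = (fV v, (fE (v, l)).2).
Proof.
case: autf => _ [_ [f_org _]]; rewrite [LHS]surjective_pairing.
by congr pair; apply: (f_org (v, l)).
Qed.

Lemma aut_target v l : sch_target (fV v) (fE (v, l)).2 = fV (sch_target v l).
Proof.
case: autf => _ [_ [f_org f_rev]].
by have := f_org (@erev Sch (v, l)); rewrite f_rev aut_edge.
Qed.

Fixpoint transport (v : V) (w : seq letter) : seq letter :=
  if w is l :: w' then (fE (v, l)).2 :: transport (sch_target v l) w' else [::].

Lemma size_transport v w : size (transport v w) = size w.
Proof. by elim: w v => [|l w IH] v //=; rewrite IH. Qed.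

Lemma walk_end_transport v w : walk_end (fV v) (transport v w) = fV (walk_end v w).
Proof. by elim: w v => [|l w IH] v //=; rewrite aut_target IH. Qed.

Lemma transport_inj v : injective (transport v).
Proof.
have fE_inj : injective fE by case: autf => _ [/bij_inj].
move=> w1; elim: w1 v => [|l1 w1 IH] v [|l2 w2] //= [l12 w12].
have [l1_l2] : (v, l1) = (v, l2) by apply: fE_inj; rewrite aut_edge (aut_edge v l2) l12.
by rewrite -l1_l2 in w12 *; rewrite (IH _ _ w12).
Qed.

Lemma card_closed_walks_aut v L : #|closed_walks v L| <= #|closed_walks (fV v) L|.
Proof.
pose tr (t : L.-tuple letter) : L.-tuple letter :=
  @Tuple L _ (transport v t) (introT eqP (etrans (size_transport v t) (size_tuple t))).
have tr_inj : injective tr by move=> t1 t2 /(f_equal val) /transport_inj /val_inj.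
rewrite -(card_imset (closed_walks v L) tr_inj); apply: subset_leq_card.
apply/subsetP => _ /imsetP [t + ->]; rewrite !inE => /asboolP closed_t.
by apply/asboolP; rewrite /= walk_end_transport closed_t.
Qed.

Lemma aut_essential_loop v L : has_essential_loop v L -> has_essential_loop (fV v) L.
Proof.
move=> loop_v; apply/negP => closed_null.
have /proper_card null_lt : null_words L \proper closed_walks v L.
  by rewrite properE null_words_closed.
have := leq_trans (card_closed_walks_aut v L) (subset_leq_card closed_null).
by rewrite leqNgt null_lt.
Qed.

Lemma transport_lab v w :
  (forall e, sch_label (fE e) = sch_label e) -> transport v w = w.
Proof.
by move=> f_lab; elim: w v => [|l w IH] v //=; rewrite IH; congr cons; apply: (f_lab (v, l)).
Qed.

End Automorphism.

Lemma lab_aut_mulg fV fE : generates x -> is_aut_lab (@sch_label A K n x) fV fE ->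
  exists2 h, normalizer K h & forall g, fV (mkV g) = mkV (h ** g).
Proof.
move=> gen_x [autf f_lab]; set h := vrep (fV (mkV 1)).
have f_mkV g : fV (mkV g) = mkV (h ** g).
  have [w <-] := word_eval_surj gen_x g.
  have -> : mkV (word_eval w) = walk_end (mkV 1) w by rewrite walk_end_mkV gmul1.
  rewrite -(walk_end_transport autf) transport_lab //.
  by rewrite -[fV (mkV 1)]mkV_vrep walk_end_mkV.
exists h => // k Kk; split.
- have /(congr1 fV) : mkV k = mkV 1 by apply/mkV_eq; rewrite invg1 mulg1.
  by rewrite !f_mkV mulg1 => /mkV_eq.
- have f_inj : injective fV by case: autf => /bij_inj.
  have : fV (mkV (h^-1 ** k ** h)) = fV (mkV 1).
    by rewrite !f_mkV !gmulA mulgV gmul1 mulg1; apply/mkV_eq; rewrite mulgK.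
  by move/f_inj/mkV_eq; rewrite invg1 mulg1.
Qed.

Lemma lab_orbits_infinite : infinite_group A -> simple_group A -> generates x ->
  proper_nontrivial K -> infinitely_many_orbits (is_aut_lab (@sch_label A K n x)).
Proof.
move=> A_inf A_simple gen_x K_pnt [l orbits].
apply: (normalizer_infinite_index subK A_inf A_simple K_pnt).
exists (map (@vrep A K) l) => a.
have [w [fV [fE [l_w [lab_f fw_a]]]]] := orbits (mkV a).
have [h Nh f_mkV] := lab_aut_mulg gen_x lab_f.
exists (vrep w); first exact: in_map.
have /mkV_eq Khwa : mkV (h ** vrep w) = mkV a by rewrite -f_mkV mkV_vrep.
have -> : a ** (vrep w)^-1 = (h ** vrep w ** a^-1)^-1 ** h.
  by rewrite !invgM !invgK !gmulA mulgVK.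
apply: (subgroupM (normalizer_subgroup K)) => //.
by apply: sub_normalizer => //; apply: subgroupV.
Qed.

Lemma aut_orbits_infinite : infinite_group A -> simple_group A -> generates x ->
  proper_nontrivial K -> cyclic_prime_order K -> infinitely_many_orbits (@is_aut Sch).
Proof.
move=> A_inf A_simple gen_x K_pnt K_cyc [l orbits].
have [Ls loops] := list_choice (fun w (_ : In w l) => essential_loop_exists gen_x K_pnt w).
pose B := flat_map (fun L => map (fun t : L.-tuple letter => word_eval t)
  (enum [set: L.-tuple letter])) Ls.
pose conj_pick b := epsilon (inhabits 1) (conj_eq_cycle K ^~ b).
apply: (normalizer_infinite_index subK A_inf A_simple K_pnt).
exists (map conj_pick B) => a.
have [w [fV [fE [l_w [autf fw_a]]]]] := orbits (mkV a).
have [L Ls_L loop_w] := loops w l_w.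
have := aut_essential_loop autf loop_w; rewrite fw_a.
case/essential_loopP => t [t_ne1 Kat].
have cyc_a := cyclic_prime_conj K_cyc Kat t_ne1.
have cyc_c := epsilon_spec (inhabits 1) (conj_eq_cycle K ^~ _) (ex_intro _ a cyc_a).
exists (conj_pick (word_eval t)).
  apply: in_map; apply/in_flat_map; exists L; split=> //.
  by apply/in_map_iff; exists t; split=> //; apply: In_mem; rewrite mem_enum inE.
by apply: normalizer_conj_eq => y; rewrite cyc_a cyc_c.
Qed.

End SchreierGraph.
End Groups.

Lemma is_aut_inv (G : sgraph) (fV : Vtx G -> Vtx G) (fE : Edg G -> Edg G) :
  is_aut fV fE -> exists gV gE, is_aut gV gE /\ cancel fV gV.
Proof.
move=> [[gV fgV gfV] [[gE fgE gfE] [f_org f_rev]]].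
exists gV, gE; split=> //; split; first by exists fV.
split; first by exists fE.
split=> e.
- by apply: (can_inj fgV); rewrite -f_org !gfE gfV.
- by apply: (can_inj fgE); rewrite f_rev !gfE.
Qed.

Lemma not_almost_transitive (G : sgraph) :
  infinitely_many_orbits (@is_aut G) -> ~ almost_transitive G.
Proof.
move=> orbits_inf [V0 almost]; apply: orbits_inf; exists V0 => v.
have [fV [fE [autf V0_fv]]] := almost v.
have [gV [gE [autg fgV]]] := is_aut_inv autf.
by exists (fV v), gV, gE.
Qed.

Theorem corollary6p7 (A : Grp) (n : nat) (x : 'I_n -> A) (K : A -> Prop) :
  infinite_group A -> simple_group A -> generates x ->
  subgroup K -> proper_nontrivial K ->
  infinitely_many_orbits (is_aut_lab (@sch_label A K n x)) /\
  (cyclic_prime_order K ->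
     infinitely_many_orbits (@is_aut (Schreier K x)) /\
     ~ almost_transitive (Schreier K x)).
Proof.
move=> A_inf A_simple gen_x subK K_pnt.
split; first exact: lab_orbits_infinite.
move=> K_cyc; have aut_inf := aut_orbits_infinite subK A_inf A_simple gen_x K_pnt K_cyc.
by split; last exact: not_almost_transitive.
Qed.
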